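(* Let $X$ be a nonempty set and let $G$ be a permutation group on $X$ which separates $X$. Then $G$ does not satisfy any group law; that is, for every $k\ge 1$ and every nontrivial element $w\ne 1$ of the free group $F_k$ on generators $f_1,\dots,f_k$, there exist $g_1,\dots,g_k\in G$ with $w(g_1,\dots,g_k)\neq 1$.
   Context: A permutation group $G$ on a set $X$ separates $X$ if for every finite subset $Y\subseteq X$, the pointwise stabilizer $G_Y=\{g\in G: y^g=y \text{ for all } y\in Y\}$ fixes no point of $X\setminus Y$. For $w\in F_k$ and $g_1,\dots,g_k\in G$, $w(g_1,\dots,g_k)$ denotes the element of $G$ obtained by substituting $f_i=g_i$. A group satisfies the group law $w$ if $w(g_1,\dots,g_k)=1$ for all $g_i\in G$. *)

From Stdlib Require List.
From mathcomp Require Import all_boot.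
Set Implicit Arguments. Unset Strict Implicit. Unset Printing Implicit Defensive.

Record Perm (X : Type) := MkPerm {
  pfun : X -> X;
  pinvf : X -> X;
  pfunK : forall x, pinvf (pfun x) = x;
  pinvK : forall x, pfun (pinvf x) = x }.

Definition pid (X : Type) : Perm X := @MkPerm X id id (fun _ => erefl) (fun _ => erefl).

(* right-action product: x^(g h) = (x^g)^h *)
Program Definition pmul (X : Type) (g h : Perm X) : Perm X :=
  @MkPerm X (fun x => pfun h (pfun g x)) (fun x => pinvf g (pinvf h x)) _ _.
Next Obligation. by rewrite pfunK pfunK. Qed.
Next Obligation. by rewrite pinvK pinvK. Qed.

Definition pinv (X : Type) (g : Perm X) : Perm X :=
  @MkPerm X (pinvf g) (pfun g) (@pinvK X g) (@pfunK X g).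

Definition is_perm_group (X : Type) (G : Perm X -> Prop) : Prop :=
  [/\ G (pid X),
      (forall g h, G g -> G h -> G (pmul g h)) &
      (forall g, G g -> G (pinv g))].

Definition separates (X : Type) (G : Perm X -> Prop) : Prop :=
  forall (Y : seq X) (x : X), ~ List.In x Y ->
    exists g, G g /\ (forall y, List.In y Y -> pfun g y = y) /\ pfun g x <> x.

(* Elements of the free group F_k, as reduced words in f_1..f_k and inverses.
   A letter (i, b) is f_i if b = false and f_i^{-1} if b = true. *)
Definition letter (k : nat) := ('I_k * bool)%type.

Fixpoint reduced (k : nat) (w : seq (letter k)) : bool :=
  match w with
  | a :: ((b :: _) as w') => ~~ ((a.1 == b.1) && (a.2 != b.2)) && reduced w'
  | _ => true
  end.

(* Substitution f_i := g_i, acting on the right: x^(l1 l2 ... ln). *)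
Definition letter_act (X : Type) (k : nat) (gs : 'I_k -> Perm X) (l : letter k) : X -> X :=
  if l.2 then pinvf (gs l.1) else pfun (gs l.1).

Definition word_act (X : Type) (k : nat) (gs : 'I_k -> Perm X) (w : seq (letter k)) (x : X) : X :=
  foldl (fun y l => letter_act gs l y) x w.

From Stdlib Require List.
From Stdlib Require Import Classical ClassicalEpsilon.
From mathcomp Require Import all_boot.
Set Implicit Arguments. Unset Strict Implicit. Unset Printing Implicit Defensive.

(* Separation makes the orbit of a point x under the pointwise stabilizer of a
   finite set D not containing x infinite.  Using this, the generators are
   built letter by letter along the word w = l_1 ... l_n so that the points
   x, x^(l_1), x^(l_1 l_2), ..., x^w are pairwise distinct.  To append a letter
   l = f_i^(+-1), compose the current action of l with an element h fixing all
   points visited so far and pushing x^(l_1 ... l_(n-1)) outside the finite set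
   of (l-preimages of) visited points.  This leaves all earlier steps through
   f_i unchanged, except possibly a last step by the inverse letter of l, which
   a reduced word does not have.  In the end x^w <> x. *)

Lemma pfun_inj (X : Type) (g : Perm X) : injective (pfun g).
Proof. exact: can_inj (@pfunK X g). Qed.

Lemma pinvf_fixed (X : Type) (g : Perm X) x : pfun g x = x -> pinvf g x = x.
Proof. by move=> gx; rewrite -{1}gx pfunK. Qed.

Lemma NoDup_rcons (X : Type) (s : seq X) x :
  List.NoDup (rcons s x) <-> List.NoDup s /\ ~ List.In x s.
Proof.
rewrite -cats1; split.
  by move=> /(@List.NoDup_remove _ s [::]); rewrite List.app_nil_r.
move=> [nds xs]; apply: List.NoDup_app => // [|y ys [yx|//]].
  exact/List.NoDup_cons/List.NoDup_nil.
by apply: xs; rewrite yx.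
Qed.

Lemma stabilizer_orbit_escapes (X : Type) (G : Perm X -> Prop) :
  separates G -> forall (D S : seq X) x, ~ List.In x D ->
  exists h, [/\ G h, forall y, List.In y D -> pfun h y = y
              & ~ List.In (pfun h x) S].
Proof.
(* Otherwise, take g fixing D and the orbit points in S other than x, with
   g x <> x; then g x is such a point, so g fixes it, whence g x = x. *)
move=> sepG D S x xD; apply: NNPP => orbitS.
pose moved s := s <> x /\ exists h, [/\ G h, forall y, List.In y D -> pfun h y = y
                                        & pfun h x = s].
pose O := List.filter (fun s => if excluded_middle_informative (moved s) then true else false) S.
have inO s : List.In s O <-> List.In s S /\ moved s.
  by rewrite List.filter_In; case: excluded_middle_informative => m; split=> -[sS ms]; split.
have xDO : ~ List.In x (D ++ O).
  by move=> /(List.in_app_or D O x) [//|/inO [_ []]].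
have [g [Gg [fixDO gx]]] := sepG (D ++ O) x xDO.
have fixD y : List.In y D -> pfun g y = y.
  by move=> yD; apply: fixDO; apply: List.in_or_app; left.
have gxS : List.In (pfun g x) S.
  by apply: NNPP => gxS; apply: orbitS; exists g.
have gxO : List.In (pfun g x) O by apply/inO; split=> //; split=> //; exists g.
by apply/gx/pfun_inj/fixDO/List.in_or_app; right.
Qed.

Section WordPaths.

Variables (X : Type) (k : nat).
Implicit Types (gs : 'I_k -> Perm X) (w : seq (letter k)).

Fixpoint word_steps gs (x : X) w : seq (X * letter k) :=
  if w is l :: w' then (x, l) :: word_steps gs (letter_act gs l x) w' else [::].

Definition word_path gs x w : seq X :=
  rcons (map fst (word_steps gs x w)) (word_act gs w x).

Lemma word_act_rcons gs w l x :
  word_act gs (rcons w l) x = letter_act gs l (word_act gs w x).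
Proof. by rewrite /word_act foldl_rcons. Qed.

Lemma word_steps_rcons gs x w l :
  word_steps gs x (rcons w l) = rcons (word_steps gs x w) (word_act gs w x, l).
Proof. by elim: w x => //= a w IHw x; rewrite IHw. Qed.

Lemma word_path_rcons gs x w l :
  word_path gs x (rcons w l) =
  rcons (word_path gs x w) (letter_act gs l (word_act gs w x)).
Proof. by rewrite /word_path word_steps_rcons map_rcons word_act_rcons. Qed.

Lemma word_steps_target gs x w y l :
  List.In (y, l) (word_steps gs x w) ->
  List.In (letter_act gs l y) (map fst (word_steps gs x w)) \/
  exists q, w = rcons q l.
Proof.
elim: w x => //= a w IHw x [[<- <-]|yl].
  by case: w {IHw} => [|b w]; [right; exists [::] | left; right; left].
case: (IHw _ yl) => [|[q ->]]; first by left; right.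
by right; exists (a :: q).
Qed.

Lemma word_steps_agree gs gs' x w :
  (forall y l, List.In (y, l) (word_steps gs x w) ->
     letter_act gs' l y = letter_act gs l y) ->
  word_steps gs' x w = word_steps gs x w /\ word_act gs' w x = word_act gs w x.
Proof.
elim: w x => [|a w IHw] x //= agree.
rewrite -!/(word_act _ w _) (agree x a (or_introl erefl)).
by have [-> ->] := IHw _ (fun y l yl => agree y l (or_intror yl)).
Qed.

End WordPaths.

Definition letter_inv k (l : letter k) : letter k := (l.1, ~~ l.2).

Lemma reduced_catl k (p q : seq (letter k)) : reduced (p ++ q) -> reduced p.
Proof.
elim: p => [|a [|b p] IHp] //= /andP[ab red].
by rewrite ab; apply: IHp.
Qed.

Lemma reduced_rcons_inv k (q : seq (letter k)) l :
  ~~ reduced (rcons (rcons q (letter_inv l)) l).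
Proof.
elim: q => [|a q IHq] /=; first by rewrite eqxx; case: (l.2).
by apply: contra IHq; case: (rcons _ _) => // b s /andP[].
Qed.

Section LetterPermutations.

Variables (X : Type) (k : nat).
Implicit Types (gs : 'I_k -> Perm X) (l : letter k).

Definition letter_perm gs l : Perm X := if l.2 then pinv (gs l.1) else gs l.1.

Lemma letter_actE gs l : letter_act gs l =1 pfun (letter_perm gs l).
Proof. by rewrite /letter_act /letter_perm; case: (l.2). Qed.

Lemma letter_act_inv gs l : letter_act gs (letter_inv l) =1 pinvf (letter_perm gs l).
Proof. by rewrite /letter_act /letter_perm /=; case: (l.2). Qed.

Definition set_letter gs l (sigma : Perm X) : 'I_k -> Perm X :=
  fun j => if j == l.1 then (if l.2 then pinv sigma else sigma) else gs j.

Lemma letter_act_set_letter gs l sigma l' y :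
  letter_act (set_letter gs l sigma) l' y =
  if l' == l then pfun sigma y
  else if l' == letter_inv l then pinvf sigma y
  else letter_act gs l' y.
Proof.
case: l l' => [i b] [j c]; rewrite /letter_act /set_letter /letter_inv /= !xpair_eqE.
by case: eqP => // _; case: b; case: c.
Qed.

End LetterPermutations.

Section Construction.

Variables (X : Type) (G : Perm X -> Prop).
Hypotheses (groupG : is_perm_group G) (sepG : separates G).

Lemma letter_perm_in k (gs : 'I_k -> Perm X) l :
  (forall i, G (gs i)) -> G (letter_perm gs l).
Proof. by case: groupG => _ _ Ginv Ggs; rewrite /letter_perm; case: (l.2); auto. Qed.

Lemma set_letter_in k (gs : 'I_k -> Perm X) l sigma :
  (forall i, G (gs i)) -> G sigma -> forall i, G (set_letter gs l sigma i).
Proof.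
case: groupG => _ _ Ginv Ggs Gsigma i; rewrite /set_letter.
by case: (i == l.1); case: (l.2); auto.
Qed.

Lemma word_path_extend k (gs : 'I_k -> Perm X) x p l :
  (forall i, G (gs i)) -> reduced (rcons p l) -> List.NoDup (word_path gs x p) ->
  exists gs', (forall i, G (gs' i)) /\ List.NoDup (word_path gs' x (rcons p l)).
Proof.
move=> Ggs red ndp.
set D := map fst (word_steps gs x p); set xp := word_act gs p x.
have [_ xpD] : List.NoDup D /\ ~ List.In xp D by apply/NoDup_rcons.
set sigma := letter_perm gs l.
have [h [Gh fixD escape]] :=
  stabilizer_orbit_escapes sepG (map (pinvf sigma) (rcons D xp)) xpD.
set gs' := set_letter gs l (pmul h sigma).
have old_steps y l' : List.In (y, l') (word_steps gs x p) ->
    letter_act gs' l' y = letter_act gs l' y.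
  move=> yl'; rewrite letter_act_set_letter.
  have yD : List.In y D by exact: List.in_map fst _ (y, l') yl'.
  case: eqP => [-> | _] /=; first by rewrite fixD // letter_actE.
  case: eqP => // l'E; subst l'; rewrite letter_act_inv.
  case: (word_steps_target yl') => [|[q pE]].
    by rewrite letter_act_inv => /fixD; apply: pinvf_fixed.
  by move: (reduced_rcons_inv q l); rewrite -pE red.
have [steps' act'] := word_steps_agree old_steps.
exists gs'; split.
  by apply: set_letter_in => //; case: groupG => _ GM _; apply/GM/letter_perm_in.
rewrite word_path_rcons /word_path steps' act' -/D -/xp.
apply/NoDup_rcons; split=> // newp.
rewrite letter_act_set_letter eqxx /= in newp.
by apply: escape; rewrite -(pfunK sigma (pfun h xp)); apply: List.in_map.
Qed.

Lemma word_path_injective k (x : X) (w : seq (letter k)) :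
  reduced w -> exists gs, (forall i, G (gs i)) /\ List.NoDup (word_path gs x w).
Proof.
elim/last_ind: w => [|p l IHp] red.
  exists (fun=> pid X); split; first by case: groupG.
  exact/List.NoDup_cons/List.NoDup_nil.
have red_p : reduced p by apply: (@reduced_catl _ _ [:: l]); rewrite cats1.
have [gs [Ggs ndp]] := IHp red_p.
exact: word_path_extend.
Qed.

End Construction.

Theorem theorem1 (X : Type) (G : Perm X -> Prop) :
  inhabited X -> is_perm_group G -> separates G ->
  forall (k : nat) (w : seq (letter k)),
    1 <= k -> reduced w -> w <> [::] ->
    exists gs : 'I_k -> Perm X,
      (forall i, G (gs i)) /\ exists x : X, word_act gs w x <> x.
Proof.
move=> [x] groupG sepG k w _ red wne.
have [gs [Ggs ndw]] := word_path_injective groupG sepG x red.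
exists gs; split=> //; exists x => wx.
case: w wne red ndw wx => // l w _ _ /NoDup_rcons[_ xw] wx.
by apply: xw; rewrite wx; left.
Qed.
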